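(* Identify the dual group of $\mathbb{T}^2$ with $\mathbb{Z}^2$ and let $K = \bigcup_{n=1}^\infty \{n\} \times \{-n,\dots,n\} \subset \mathbb{Z}^2$. Then $K$ is strictly positive definite, while the set $K_1 = \{\gamma \in \mathbb{Z} : \{\omega \in \mathbb{Z} : (\gamma,\omega) \in K\} \text{ is strictly positive definite in } \mathbb{Z}\}$ is empty.
   Context: $\mathbb{Z}^r$ is regarded as the dual group of $\mathbb{T}^r$ ($\mathbb{T}$ the complex numbers of modulus one) via $\gamma(z) = \prod_{k=1}^r z_k^{\gamma_k}$. A trigonometric polynomial on $\mathbb{Z}^r$ is a function of the form $\gamma \mapsto \sum_{i=1}^n c_i \gamma(x_i)$ with $x_i \in \mathbb{T}^r$, $c_i \in \mathbb{C}$. A subset $K \subset \mathbb{Z}^r$ is strictly positive definite if the only trigonometric polynomial vanishing at every point of $K$ is the identically zero function. *)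

From Stdlib Require Import Reals ZArith.
Open Scope R_scope.

Record C := mkC { Cre : R ; Cim : R }.

Definition C0 : C := mkC 0 0.
Definition C1 : C := mkC 1 0.
Definition Cadd (z w : C) : C := mkC (Cre z + Cre w) (Cim z + Cim w).
Definition Cmul (z w : C) : C :=
  mkC (Cre z * Cre w - Cim z * Cim w) (Cre z * Cim w + Cim z * Cre w).
Definition Cnorm2 (z : C) : R := Cre z * Cre z + Cim z * Cim z.
Definition Cinv (z : C) : C := mkC (Cre z / Cnorm2 z) (- Cim z / Cnorm2 z).

Fixpoint Cpow (z : C) (n : nat) : C :=
  match n with O => C1 | S m => Cmul z (Cpow z m) end.

(** Integer powers z^k, k : Z (used for z of modulus one, so z <> 0). *)
Definition Czpow (z : C) (k : Z) : C :=
  match k with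
  | Z0 => C1
  | Zpos p => Cpow z (Pos.to_nat p)
  | Zneg p => Cpow (Cinv z) (Pos.to_nat p)
  end.

Definition in_T (z : C) : Prop := Cnorm2 z = 1.

Fixpoint Csum (n : nat) (f : nat -> C) : C :=
  match n with O => C0 | S m => Cadd (Csum m f) (f m) end.
Fixpoint Cprod (n : nat) (f : nat -> C) : C :=
  match n with O => C1 | S m => Cmul (Cprod m f) (f m) end.

(** Elements of Z^r are represented by gamma : nat -> Z (only the
    coordinates 0..r-1 are used), points of T^r by x : nat -> C with
    x k in T for k < r. *)

Definition character (r : nat) (gamma : nat -> Z) (x : nat -> C) : C :=
  Cprod r (fun k => Czpow (x k) (gamma k)).

Definition in_Tr (r : nat) (x : nat -> C) : Prop :=
  forall k, (k < r)%nat -> in_T (x k).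

Definition trig_poly (r n : nat) (c : nat -> C) (x : nat -> nat -> C)
  (gamma : nat -> Z) : C :=
  Csum n (fun i => Cmul (c i) (character r gamma (x i))).

Definition strictly_pos_def (r : nat) (K : (nat -> Z) -> Prop) : Prop :=
  forall (n : nat) (c : nat -> C) (x : nat -> nat -> C),
    (forall i, (i < n)%nat -> in_Tr r (x i)) ->
    (forall gamma, K gamma -> trig_poly r n c x gamma = C0) ->
    forall gamma, trig_poly r n c x gamma = C0.

Definition K_set (gamma : nat -> Z) : Prop :=
  (1 <= gamma 0%nat)%Z /\ (- gamma 0%nat <= gamma 1%nat <= gamma 0%nat)%Z.

Definition pairZ (g w : Z) : nat -> Z :=
  fun k => match k with O => g | S O => w | _ => 0%Z end.

(** K_1 = { g in Z : { w in Z : (g,w) in K } is strictly positive definite in Z }.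
    Subsets of Z = Z^1 are predicates on v : nat -> Z through v 0. *)
Definition K1_set (g : Z) : Prop :=
  strictly_pos_def 1 (fun v => K_set (pairZ g (v 0%nat))).

(* Strict positive definiteness of K: if p(γ) = Σ_{i<n} c_i γ(x_i) vanishes on K,
   then for each first coordinate γ_0 ∈ [n+1, 2n] the one-variable exponential
   sum γ_1 ↦ p(γ_0, γ_1) has n frequencies and vanishes on the n consecutive
   integers 0, ..., n-1 ⊂ [-γ_0, γ_0], hence vanishes identically; then for every
   γ_1 the sum γ_0 ↦ p(γ_0, γ_1) vanishes on n+1, ..., 2n, hence identically.
   An exponential sum with m nonzero frequencies vanishing on m consecutive
   integers vanishes everywhere: applying the difference operator u ↦ u(·+1) - z u
   for one frequency z removes that frequency, and by induction leaves a
   geometric sequence that must vanish.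

   Each section of K is contained in a bounded interval [-g, g] ⊂ ℤ, and no bounded interval
   is strictly positive definite: with ζ a primitive N-th root of unity for
   N = 4(g+1), the polynomial w ↦ Σ_{k<N} ζ^{k(w-g-1)} vanishes on [-g, g] but
   equals N at w = g+1. *)
From Pilot Require Import Defs.
From Stdlib Require Import Reals ZArith Lia Lra Psatz.
Import Defs.
Open Scope R_scope.

Definition Copp (z : C) : C := mkC (- Cre z) (- Cim z).
Definition Csub (z w : C) : C := Cadd z (Copp w).

Lemma C_ext (z w : C) : Cre z = Cre w -> Cim z = Cim w -> z = w.
Proof. destruct z, w; simpl; intros; subst; reflexivity. Qed.

Lemma C_ring : ring_theory C0 C1 Cadd Cmul Csub Copp (@eq C).
Proof.
  constructor; intros; apply C_ext; destruct x; try destruct y; try destruct z;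
    unfold Cadd, Cmul, Csub, Copp, C0, C1; simpl; ring.
Qed.
Add Ring C_ring : C_ring.

Lemma in_T_Cnorm2_neq0 (z : C) : in_T z -> Cnorm2 z <> 0.
Proof. unfold in_T; lra. Qed.

Lemma Cinv_l (z : C) : Cnorm2 z <> 0 -> Cmul (Cinv z) z = C1.
Proof.
  destruct z as [a b]; unfold Cinv, Cnorm2, Cmul, C1; simpl; intro Hz.
  apply C_ext; simpl; field; exact Hz.
Qed.

Lemma Cmul_eq0_r (a w : C) : Cnorm2 a <> 0 -> Cmul a w = C0 -> w = C0.
Proof.
  intros Ha Haw.
  transitivity (Cmul (Cmul (Cinv a) a) w); [rewrite Cinv_l by exact Ha; ring |].
  transitivity (Cmul (Cinv a) (Cmul a w)); [ring | rewrite Haw; ring].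
Qed.

Lemma Czpow_succ (z : C) (k : Z) :
  Cnorm2 z <> 0 -> Czpow z (Z.succ k) = Cmul z (Czpow z k).
Proof.
  intro Hz. destruct k as [|p|p].
  - simpl. ring.
  - replace (Z.succ (Z.pos p)) with (Z.pos (Pos.succ p)) by lia.
    unfold Czpow. rewrite Pos2Nat.inj_succ. reflexivity.
  - destruct (Pos.succ_pred_or p) as [-> | Hp].
    + simpl.
      transitivity (Cmul (Cmul (Cinv z) z) C1); [rewrite Cinv_l by exact Hz |]; ring.
    + rewrite <- Hp.
      replace (Z.succ (Z.neg (Pos.succ (Pos.pred p)))) with (Z.neg (Pos.pred p)) by lia.
      unfold Czpow. rewrite Pos2Nat.inj_succ. simpl Cpow.
      transitivity (Cmul (Cmul (Cinv z) z) (Cpow (Cinv z) (Pos.to_nat (Pos.pred p))));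
        [rewrite Cinv_l by exact Hz |]; ring.
Qed.

Lemma Csum_ext (n : nat) (f g : nat -> C) :
  (forall i, (i < n)%nat -> f i = g i) -> Csum n f = Csum n g.
Proof.
  induction n as [|n IHn]; intros Hfg; simpl; [reflexivity |].
  rewrite IHn by (intros; apply Hfg; lia). rewrite Hfg by lia. reflexivity.
Qed.

Lemma Csum_sub_scale (n : nat) (f g : nat -> C) (a : C) :
  Csum n (fun i => Csub (f i) (Cmul a (g i))) = Csub (Csum n f) (Cmul a (Csum n g)).
Proof. induction n as [|n IHn]; simpl; [ring | rewrite IHn; ring]. Qed.

Lemma geometric_seq_eq0 (u : Z -> C) (a : C) (k0 : Z) :
  Cnorm2 a <> 0 -> (forall k, u (Z.succ k) = Cmul a (u k)) ->
  u k0 = C0 -> forall k, u k = C0.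
Proof.
  intros Ha Hu Hk0.
  refine (Z.order_induction (fun k => u k = C0) _ k0 Hk0 _ _).
  - intros k _ Hk. rewrite Hu, Hk. ring.
  - intros k _ Hk. apply (Cmul_eq0_r a); [exact Ha | rewrite <- Hu; exact Hk].
Qed.

Definition exp_sum (m : nat) (d z : nat -> C) (k : Z) : C :=
  Csum m (fun i => Cmul (d i) (Czpow (z i) k)).

(* The difference operator u ↦ u(· + 1) - z_m u kills the frequency z_m. *)
Lemma exp_sum_difference_last (m : nat) (d z : nat -> C) (k : Z) :
  (forall i, (i <= m)%nat -> Cnorm2 (z i) <> 0) ->
  exp_sum m (fun i => Cmul (d i) (Csub (z i) (z m))) z k
  = Csub (exp_sum (S m) d z (Z.succ k)) (Cmul (z m) (exp_sum (S m) d z k)).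
Proof.
  intro Hz. unfold exp_sum. cbn [Csum].
  rewrite (Czpow_succ (z m)) by (apply Hz; lia).
  rewrite (Csum_ext m (fun i => Cmul (d i) (Czpow (z i) (Z.succ k)))
             (fun i => Cmul (d i) (Cmul (z i) (Czpow (z i) k))))
    by (intros; rewrite Czpow_succ by (apply Hz; lia); reflexivity).
  rewrite (Csum_ext m (fun i => Cmul (Cmul (d i) (Csub (z i) (z m))) (Czpow (z i) k))
             (fun i => Csub (Cmul (d i) (Cmul (z i) (Czpow (z i) k)))
                            (Cmul (z m) (Cmul (d i) (Czpow (z i) k)))))
    by (intros; ring).
  rewrite Csum_sub_scale. ring.
Qed.

Lemma exp_sum_eq0_of_consecutive (m : nat) (d z : nat -> C) (k0 : Z) :
  (forall i, (i < m)%nat -> Cnorm2 (z i) <> 0) ->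
  (forall j, (j < m)%nat -> exp_sum m d z (k0 + Z.of_nat j) = C0) ->
  forall k, exp_sum m d z k = C0.
Proof.
  revert d k0. induction m as [|m IHm]; intros d k0 Hz Hvan k; [reflexivity |].
  assert (Hdiff : forall k, exp_sum m (fun i => Cmul (d i) (Csub (z i) (z m))) z k = C0).
  { apply (IHm _ k0); [intros; apply Hz; lia |].
    intros j Hj. rewrite exp_sum_difference_last by (intros; apply Hz; lia).
    replace (Z.succ (k0 + Z.of_nat j)) with (k0 + Z.of_nat (S j))%Z by lia.
    rewrite !Hvan by lia. ring. }
  apply (geometric_seq_eq0 _ (z m) k0); [apply Hz; lia | |].
  - intro k'. specialize (Hdiff k'). rewrite exp_sum_difference_last in Hdiff
      by (intros; apply Hz; lia).
    transitivity (Cadd (Csub (exp_sum (S m) d z (Z.succ k'))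
                             (Cmul (z m) (exp_sum (S m) d z k')))
                       (Cmul (z m) (exp_sum (S m) d z k'))); [ring |].
    rewrite Hdiff. ring.
  - rewrite <- (Z.add_0_r k0). apply (Hvan 0%nat). lia.
Qed.

Lemma trig_poly2_exp_sum_snd (n : nat) (c : nat -> C) (x : nat -> nat -> C) (gamma : nat -> Z) :
  trig_poly 2 n c x gamma
  = exp_sum n (fun i => Cmul (c i) (Czpow (x i 0%nat) (gamma 0%nat))) (fun i => x i 1%nat)
      (gamma 1%nat).
Proof. apply Csum_ext; intros; unfold character; simpl; ring. Qed.

Lemma trig_poly2_exp_sum_fst (n : nat) (c : nat -> C) (x : nat -> nat -> C) (gamma : nat -> Z) :
  trig_poly 2 n c x gamma
  = exp_sum n (fun i => Cmul (c i) (Czpow (x i 1%nat) (gamma 1%nat))) (fun i => x i 0%nat)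
      (gamma 0%nat).
Proof. apply Csum_ext; intros; unfold character; simpl; ring. Qed.

Lemma K_set_strictly_pos_def : strictly_pos_def 2 K_set.
Proof.
  intros n c x Hx HK.
  assert (Hnode : forall k i, (k < 2)%nat -> (i < n)%nat -> Cnorm2 (x i k) <> 0).
  { intros k i Hk Hi. apply in_T_Cnorm2_neq0, (Hx i Hi k Hk). }
  assert (Hcols : forall j q, (j < n)%nat ->
                    trig_poly 2 n c x (pairZ (Z.of_nat (n + 1) + Z.of_nat j) q) = C0).
  { intros j q Hj. rewrite trig_poly2_exp_sum_snd.
    apply (exp_sum_eq0_of_consecutive _ _ _ 0); [intros; apply Hnode; lia |].
    intros j' Hj'.
    specialize (HK (pairZ (Z.of_nat (n + 1) + Z.of_nat j) (0 + Z.of_nat j'))).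
    rewrite trig_poly2_exp_sum_snd in HK. apply HK. unfold K_set, pairZ. lia. }
  intro gamma. rewrite trig_poly2_exp_sum_fst.
  apply (exp_sum_eq0_of_consecutive _ _ _ (Z.of_nat (n + 1))); [intros; apply Hnode; lia |].
  intros j Hj.
  specialize (Hcols j (gamma 1%nat) Hj). rewrite trig_poly2_exp_sum_fst in Hcols.
  exact Hcols.
Qed.

Definition cis (t : R) : C := mkC (cos t) (sin t).

Lemma cis_add (s t : R) : Cmul (cis s) (cis t) = cis (s + t).
Proof. unfold cis, Cmul; simpl. rewrite cos_plus, sin_plus. f_equal; ring. Qed.

Lemma cis_in_T (t : R) : in_T (cis t).
Proof. unfold in_T, Cnorm2, cis; simpl. pose proof (sin2_cos2 t). unfold Rsqr in *. lra. Qed.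

Lemma cis_0 : cis 0 = C1.
Proof. unfold cis, C1. rewrite cos_0, sin_0. reflexivity. Qed.

Lemma Cinv_cis (t : R) : Cinv (cis t) = cis (- t).
Proof.
  unfold Cinv. rewrite (cis_in_T t).
  unfold cis; simpl. rewrite cos_neg, sin_neg. f_equal; field.
Qed.

Lemma Cpow_cis (n : nat) (t : R) : Cpow (cis t) n = cis (INR n * t).
Proof.
  induction n as [|n IHn]; simpl Cpow.
  - rewrite Rmult_0_l, cis_0. reflexivity.
  - rewrite IHn, cis_add, S_INR. f_equal. ring.
Qed.

Lemma Czpow_cis (k : Z) (t : R) : Czpow (cis t) k = cis (IZR k * t).
Proof.
  destruct k as [|p|p]; unfold Czpow.
  - rewrite Rmult_0_l, cis_0. reflexivity.
  - rewrite Cpow_cis, INR_IZR_INZ, positive_nat_Z. reflexivity.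
  - rewrite Cinv_cis, Cpow_cis, INR_IZR_INZ, positive_nat_Z.
    replace (Z.neg p) with (- Z.pos p)%Z by reflexivity.
    rewrite opp_IZR. f_equal. ring.
Qed.

Lemma cis_mult_2PI (m : Z) : cis (IZR m * (2 * PI)) = C1.
Proof.
  rewrite <- Czpow_cis.
  replace (cis (2 * PI)) with C1
    by (unfold cis, C1; rewrite cos_2PI, sin_2PI; reflexivity).
  rewrite <- cis_0, Czpow_cis, Rmult_0_r. reflexivity.
Qed.

Lemma cis_geometric_sum (N : nat) (phi : R) :
  Cmul (Csub (cis phi) C1) (Csum N (fun k => cis (INR k * phi)))
  = Csub (cis (INR N * phi)) C1.
Proof.
  induction N as [|N IHN]; cbn [Csum].
  - rewrite Rmult_0_l, cis_0. ring.
  - transitivity (Cadd (Cmul (Csub (cis phi) C1) (Csum N (fun k => cis (INR k * phi))))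
                       (Cmul (Csub (cis phi) C1) (cis (INR N * phi)))); [ring |].
    rewrite IHN, S_INR.
    replace (cis ((INR N + 1) * phi)) with (Cmul (cis phi) (cis (INR N * phi)))
      by (rewrite cis_add; f_equal; ring).
    ring.
Qed.

Lemma roots_of_unity_sum_eq0 (N : nat) (m : Z) :
  m <> 0%Z -> (2 * Z.abs m < Z.of_nat N)%Z ->
  Csum N (fun k => cis (INR k * (2 * PI * IZR m / INR N))) = C0.
Proof.
  intros Hm HmN.
  set (phi := 2 * PI * IZR m / INR N).
  assert (HN : 0 < INR N) by (apply lt_0_INR; lia).
  assert (Hsign : 0 < IZR m /\ 2 * IZR m < INR N \/ IZR m < 0 /\ - (2 * IZR m) < INR N).
  { rewrite INR_IZR_INZ.
    destruct (proj1 (Z.lt_gt_cases m 0) Hm); [right | left]; split;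
      rewrite <- ?mult_IZR, <- ?opp_IZR; apply IZR_lt; lia. }
  set (r := 2 * IZR m / INR N).
  assert (Hr : r * INR N = 2 * IZR m) by (unfold r; field; lra).
  assert (Hphi : phi = PI * r) by (unfold phi, r; field; lra).
  pose proof PI_RGT_0.
  assert (Hsin : sin phi <> 0).
  { rewrite Hphi. destruct Hsign as [[Hm1 Hm2] | [Hm1 Hm2]].
    - assert (0 < r < 1) by nra. apply Rgt_not_eq, sin_gt_0; nra.
    - assert (-1 < r < 0) by nra. apply Rlt_not_eq, sin_lt_0_var; nra. }
  apply (Cmul_eq0_r (Csub (cis phi) C1)).
  - unfold Cnorm2, Csub, Cadd, Copp, cis, C1; simpl.
    apply Rgt_not_eq. pose proof (Rsqr_pos_lt _ Hsin). pose proof (Rle_0_sqr (cos phi + - (1))).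
    unfold Rsqr in *. lra.
  - rewrite cis_geometric_sum.
    replace (INR N * phi) with (IZR m * (2 * PI)) by
      (rewrite Hphi; transitivity (PI * (r * INR N)); [rewrite Hr |]; ring).
    rewrite cis_mult_2PI. ring.
Qed.

Lemma Cre_Csum_C1 (N : nat) : Cre (Csum N (fun _ => C1)) = INR N.
Proof.
  induction N as [|N IHN]; [reflexivity |].
  cbn [Csum Cadd Cre]. rewrite IHN, S_INR. reflexivity.
Qed.

Lemma interval_not_strictly_pos_def (G : nat) :
  ~ strictly_pos_def 1 (fun v => (- Z.of_nat G <= v 0%nat <= Z.of_nat G)%Z).
Proof.
  set (N := (4 * (G + 1))%nat). set (s := (Z.of_nat G + 1)%Z).
  set (a := 2 * PI / INR N).
  assert (HN : 0 < INR N) by (apply lt_0_INR; unfold N; lia).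
  assert (Hpoly : forall gamma : nat -> Z,
    trig_poly 1 N (fun k => cis (- (INR k * a) * IZR s)) (fun k _ => cis (INR k * a)) gamma
    = Csum N (fun k => cis (INR k * (2 * PI * IZR (gamma 0%nat - s) / INR N)))).
  { intro gamma. apply Csum_ext. intros k _.
    unfold character. cbn [Cprod]. rewrite Czpow_cis.
    transitivity (Cmul (cis (- (INR k * a) * IZR s)) (cis (IZR (gamma 0%nat) * (INR k * a))));
      [ring |].
    rewrite cis_add, minus_IZR.
    f_equal. unfold a. field. lra. }
  intro Hspd.
  assert (Hs : trig_poly 1 N (fun k => cis (- (INR k * a) * IZR s))
                 (fun k _ => cis (INR k * a)) (fun _ => s) = C0).
  { apply Hspd; [intros i _ k _; apply cis_in_T |].
    intros gamma Hgamma. rewrite Hpoly.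
    apply roots_of_unity_sum_eq0; unfold s, N; lia. }
  rewrite Hpoly, Z.sub_diag in Hs.
  rewrite (Csum_ext N _ (fun _ => C1)) in Hs
    by (intros i _; replace (INR i * (2 * PI * 0 / INR N)) with 0 by (field; lra); exact cis_0).
  pose proof (Cre_Csum_C1 N) as Hre. rewrite Hs in Hre. simpl in Hre. lra.
Qed.

Lemma strictly_pos_def_mono (r : nat) (K K' : (nat -> Z) -> Prop) :
  (forall gamma, K gamma -> K' gamma) -> strictly_pos_def r K -> strictly_pos_def r K'.
Proof. intros HKK' HK n c x Hx Hvan. apply HK; [exact Hx |]. intros; apply Hvan, HKK'; assumption. Qed.

Lemma K1_set_empty (g : Z) : ~ K1_set g.
Proof.
  intro Hg. apply (interval_not_strictly_pos_def (Z.to_nat g)).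
  revert Hg. apply strictly_pos_def_mono.
  intros v. unfold K_set, pairZ. lia.
Qed.

Theorem mainTheorem13 :
  strictly_pos_def 2 K_set /\ (forall g : Z, ~ K1_set g).
Proof. split; [exact K_set_strictly_pos_def | exact K1_set_empty]. Qed.
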